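(* A topological space $X$ is ultrametrizable in the ordinary sense (i.e. $\mathrm{Ult}(X;\mathbb{R}_{\ge0})\ne\emptyset$) if and only if $\omega_0\in\mathrm{MG}(X)$.
   Context: A linearly ordered Abelian group is an Abelian group with a linear order compatible with addition. For $x,y\in G_{>0}$, $x\asymp y$ iff $y\le nx$ and $x\le my$ for some $n,m\in\mathbb{Z}_{\ge1}$; $\mathrm{Arc}(G)=G_{>0}/\asymp$, ordered by $[x]\preceq[y]$ iff ($nx<y$ for all $n$) or $x\asymp y$; $\mathrm{Arc}(G)^\perp$ is $\mathrm{Arc}(G)$ with a new least element adjoined. For a bottomed linearly ordered set $S$ (least element $\perp_S$, $S^*=S\setminus\{\perp_S\}$), $\chi(S)$ is the least cardinal $\kappa>0$ such that some strictly decreasing family $(s_\alpha)_{\alpha<\kappa}$ in $S^*$ has every $t\in S^*$ bounded below by some $s_\alpha$. A $G$-metric on $X$: $d\colon X^2\to G$ with $d(x,y)=0\iff x=y$, $d\ge0$, symmetric, triangle inequality; $\mathrm{Met}(X;G)$ is the set of $G$-metrics generating the topology of $X$ (via open balls). An $S$-ultrametric: $d\colon X^2\to S$ with $d(x,y)=\perp_S\iff x=y$, symmetric, $d(x,y)\le\max\{d(x,z),d(z,y)\}$; $\mathrm{Ult}(X;S)$ those generating the topology. $\kappa\in\mathrm{MG}(X)$ iff some linearly ordered Abelian group $G$ with $\chi(\mathrm{Arc}(G)^\perp)=\kappa$ has $\mathrm{Met}(X;G)\ne\emptyset$. *)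

From HB Require Import structures.
From mathcomp Require Import all_boot all_order all_algebra.
From mathcomp Require Import all_classical all_reals topology.
From mathcomp Require Import Rstruct Rstruct_topology.

Set Implicit Arguments.
Unset Strict Implicit.
Unset Printing Implicit Defensive.
Import Order.TTheory GRing.Theory Num.Theory.
Local Open Scope classical_set_scope.
Local Open Scope ring_scope.

Definition lin_ord_abelian (G : zmodType) (le : G -> G -> Prop) : Prop :=
  (forall x, le x x) /\
  (forall x y, le x y -> le y x -> x = y) /\
  (forall x y z, le x y -> le y z -> le x z) /\
  (forall x y, le x y \/ le y x) /\
  (forall x y z, le x y -> le (x + z) (y + z)).

Definition lt_of (G : zmodType) (le : G -> G -> Prop) (x y : G) : Prop :=
  le x y /\ x <> y.

Definition arc_equiv (G : zmodType) (le : G -> G -> Prop) (x y : G) : Prop :=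
  (exists n : nat, (1 <= n)%N /\ le y (x *+ n)) /\
  (exists m : nat, (1 <= m)%N /\ le x (y *+ m)).

(* The order on Arc(G) = G_{>0}/≍, expressed on representatives:
   [x] ⪯ [y] iff (n x < y for all n >= 1) or x ≍ y. *)
Definition arc_le (G : zmodType) (le : G -> G -> Prop) (x y : G) : Prop :=
  (forall n : nat, (1 <= n)%N -> lt_of le (x *+ n) y) \/ arc_equiv le x y.

Definition arc_lt (G : zmodType) (le : G -> G -> Prop) (x y : G) : Prop :=
  arc_le le x y /\ ~ arc_le le y x.

(* A strictly decreasing family (s_a)_{a in I} (I ordered by ltI) in
   Arc(G) = (Arc(G)^⊥)^*, given by representatives in G_{>0}, such that
   every t in Arc(G) is bounded below by some s_a. *)
Definition arc_coinitial_dec_family (G : zmodType) (le : G -> G -> Prop)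
    (I : Type) (ltI : I -> I -> Prop) (s : I -> G) : Prop :=
  (forall a, lt_of le 0 (s a)) /\
  (forall a b, ltI a b -> arc_lt le (s b) (s a)) /\
  (forall t, lt_of le 0 t -> exists a, arc_le le (s a) t).

(* χ(Arc(G)^⊥) = ω₀ : the least cardinal κ > 0 admitting such a family
   (indexed by the ordinals α < κ) is ω₀; i.e. no nonzero finite cardinal
   k admits one (indices 'I_k with the usual order), and ω₀ (indices nat)
   does. *)
Definition chi_arc_eq_omega0 (G : zmodType) (le : G -> G -> Prop) : Prop :=
  (forall k : nat, (0 < k)%N ->
     ~ exists s : 'I_k -> G,
         arc_coinitial_dec_family le (fun a b : 'I_k => (a < b)%N) s) /\
  (exists s : nat -> G, arc_coinitial_dec_family le (fun a b : nat => (a < b)%N) s).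

Definition is_Gmetric (X : Type) (G : zmodType) (le : G -> G -> Prop)
    (d : X -> X -> G) : Prop :=
  (forall x y, d x y = 0 <-> x = y) /\
  (forall x y, le 0 (d x y)) /\
  (forall x y, d x y = d y x) /\
  (forall x y z, le (d x y) (d x z + d z y)).

Definition Gmetric_generates (X : topologicalType) (G : zmodType)
    (le : G -> G -> Prop) (d : X -> X -> G) : Prop :=
  forall U : set X, open U <->
    (forall x, U x -> exists r : G, lt_of le 0 r /\
        [set y | lt_of le (d x y) r] `<=` U).

Definition in_Met (X : topologicalType) (G : zmodType) (le : G -> G -> Prop)
    (d : X -> X -> G) : Prop :=
  is_Gmetric le d /\ Gmetric_generates le d.

Definition omega0_in_MG (X : topologicalType) : Prop :=
  exists (G : zmodType) (le : G -> G -> Prop),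
    lin_ord_abelian le /\ chi_arc_eq_omega0 le /\
    exists d : X -> X -> G, in_Met le d.

Definition is_R_ultrametric (X : Type) (d : X -> X -> Rdefinitions.R) : Prop :=
  (forall x y, 0 <= d x y) /\
  (forall x y, d x y = 0 <-> x = y) /\
  (forall x y, d x y = d y x) /\
  (forall x y z, d x y <= Num.max (d x z) (d z y)).

Definition in_Ult_R (X : topologicalType) (d : X -> X -> Rdefinitions.R) : Prop :=
  is_R_ultrametric d /\
  (forall U : set X, open U <->
     (forall x, U x -> exists r : Rdefinitions.R, 0 < r /\ [set y | d x y < r] `<=` U)).

From mathcomp Require Import all_boot all_order all_algebra.
From mathcomp Require Import all_classical all_reals topology.
From mathcomp Require Import Rstruct Rstruct_topology zify.

(** An ordinary ultrametric d yields a metric with values in Z[X], ordered by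
    the sign of the lowest nonzero coefficient: send d(x, y) > 0 to X^n with
    n = floor(1/d(x, y)).  The archimedean classes of Z[X] are indexed by the
    lowest degree, so the powers X^n form a strictly decreasing coinitial
    sequence in Arc(Z[X]), whence chi = omega_0; and the ultrametric inequality
    makes X^n(x,y) dominated by X^n(x,z) or by X^n(z,y).  Conversely, given a
    G-metric d and a coinitial sequence (s_n) in Arc(G), send d(x, y) > 0 to
    1/(k+1) with k the least index such that [s_k] <= [d(x, y)]; this is an
    ultrametric because d(x, y) <= 2 max(d(x, z), d(z, y)) lies below the
    archimedean class of that maximum.  In both directions the balls of either
    metric contain balls of the other, so the topologies agree. *)

Set Implicit Arguments.
Unset Strict Implicit.
Unset Printing Implicit Defensive.
Import Order.TTheory GRing.Theory Num.Theory.
Local Open Scope classical_set_scope.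
Local Open Scope ring_scope.

Lemma nested_balls_generate (X I J : Type) (PI : I -> Prop) (PJ : J -> Prop)
    (B : X -> I -> set X) (C : X -> J -> set X) :
  (forall x i, PI i -> exists2 j, PJ j & C x j `<=` B x i) ->
  (forall x j, PJ j -> exists2 i, PI i & B x i `<=` C x j) ->
  forall U : set X,
    (forall x, U x -> exists i, PI i /\ B x i `<=` U) <->
    (forall x, U x -> exists j, PJ j /\ C x j `<=` U).
Proof.
move=> CB BC U; split=> hU x /hU [k [Pk sub]].
- by have [j Pj Cj] := CB x k Pk; exists j; split=> // y /Cj /sub.
- by have [i Pi Bi] := BC x k Pk; exists i; split=> // y /Bi /sub.
Qed.

Section InvNat.
Variable R : archiRealFieldType.

Lemma ltn_truncn_inv (r : R) n : 0 < r -> (n < Num.truncn r^-1)%N = (r <= n.+1%:R^-1).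
Proof. by move=> r_gt0; rewrite truncn_gt_nat invf_pge ?posrE. Qed.

Lemma leq_truncn_inv (r r' : R) :
  0 < r -> r <= r' -> (Num.truncn r'^-1 <= Num.truncn r^-1)%N.
Proof.
by move=> r_gt0 ler; apply: le_truncn; rewrite lef_pV2 ?posrE // (lt_le_trans r_gt0).
Qed.

Lemma exists_inv_natS_lt (e : R) : 0 < e -> exists n : nat, n.+1%:R^-1 < e.
Proof.
by move=> e_gt0; exists (Num.truncn e^-1); rewrite -invf_plt ?posrE // truncnS_gt.
Qed.

Lemma ltf_inv_natS (m n : nat) : (n.+1%:R^-1 < m.+1%:R^-1 :> R) = (m < n)%N.
Proof. by rewrite ltf_pV2 ?posrE ?ltr0n // ltr_nat ltnS. Qed.

Lemma lef_inv_natS (m n : nat) : (n.+1%:R^-1 <= m.+1%:R^-1 :> R) = (m <= n)%N.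
Proof. by rewrite lef_pV2 ?posrE ?ltr0n // ler_nat ltnS. Qed.

End InvNat.

Section LinOrdAbelian.
Variables (G : zmodType) (le : G -> G -> Prop).
Hypothesis leG : lin_ord_abelian le.

Let leG_refl x : le x x. Proof. by case: leG. Qed.
Let leG_antisym x y : le x y -> le y x -> x = y.
Proof. by case: leG => _ [anti _]; apply: anti. Qed.
Let leG_trans x y z : le x y -> le y z -> le x z.
Proof. by case: leG => _ [_ [trans _]]; apply: trans. Qed.
Let leG_total x y : le x y \/ le y x. Proof. by case: leG => _ [_ [_ [total _]]]. Qed.
Let leG_add2r x y z : le x y -> le (x + z) (y + z).
Proof. by case: leG => _ [_ [_ [_ add2r]]]; apply: add2r. Qed.

Lemma le_addr_nonneg x y : le 0 y -> le x (x + y).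
Proof. by move=> /(leG_add2r x); rewrite add0r addrC. Qed.

Lemma le_addl_nonneg x y : le 0 x -> le y (x + y).
Proof. by rewrite addrC; apply: le_addr_nonneg. Qed.

Lemma le_lt_trans_of x y z : le x y -> lt_of le y z -> lt_of le x z.
Proof.
move=> lexy [leyz neyz]; split; first exact: leG_trans lexy leyz.
by move=> exz; apply: neyz; apply: leG_antisym leyz _; rewrite -exz.
Qed.

Lemma lt_of_not_le x y : ~ le y x -> lt_of le x y.
Proof.
by move=> nleyx; case: (leG_total x y) => // lexy; split=> // exy; apply: nleyx; rewrite exy.
Qed.

Lemma le_mulrn x y n : le x y -> le (x *+ n) (y *+ n).
Proof.
move=> lexy; elim: n => [|n IH]; first by rewrite !mulr0n.
rewrite !mulrS; apply: (leG_trans (leG_add2r (x *+ n) lexy)).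
by rewrite !(addrC y); apply: leG_add2r.
Qed.

Lemma arc_le_trans_le p q r m :
  (0 < m)%N -> arc_le le p q -> le q (r *+ m) -> arc_le le p r.
Proof.
move=> m_gt0 lepq leqr.
case: (pselect (exists2 n, (1 <= n)%N & le r (p *+ n))) => [[n n_gt0 lerp]|nlerp].
- right; split; first by exists n.
  case: lepq => [ltpq|[_ [k [k_gt0 lepqk]]]].
  + have [lepq1 _] := ltpq 1%N isT; rewrite mulr1n in lepq1.
    by exists m; split=> //; apply: leG_trans leqr.
  + exists (m * k)%N; split; first by rewrite muln_gt0 m_gt0.
    by rewrite mulrnA; apply: leG_trans lepqk (le_mulrn k leqr).
- by left=> n n_gt0; apply: lt_of_not_le => lerp; apply: nlerp; exists n.
Qed.

Lemma arc_le_refl p : arc_le le p p.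
Proof. by right; split; exists 1%N; rewrite mulr1n. Qed.

Lemma arc_le_trans p q r : arc_le le p q -> arc_le le q r -> arc_le le p r.
Proof.
move=> lepq [ltqr|[_ [m [m_gt0 leqr]]]]; last exact: arc_le_trans_le leqr.
have [leqr _] := ltqr 1%N isT; rewrite mulr1n in leqr.
by apply: (arc_le_trans_le (m := 1)) lepq _.
Qed.

(* A finite coinitial family would have a least class [s' last], yet any
   [s n] below it has [s (n+1)] strictly below it. *)
Lemma chi_arc_eq_omega0I (s : nat -> G) :
  arc_coinitial_dec_family le (fun a b : nat => (a < b)%N) s -> chi_arc_eq_omega0 le.
Proof.
move=> sfam; split; last by exists s.
case: sfam => spos [sdec scoi] [//|k] _ [s' [s'pos [s'dec s'coi]]].
have [n lesn] := scoi _ (s'pos ord_max).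
have [a leas] := s'coi _ (spos n.+1).
have le_last : arc_le le (s' ord_max) (s' a).
  have := leq_ord a; rewrite leq_eqVlt => /orP[/eqP ea|ltak].
    have -> : a = ord_max by apply: val_inj.
    exact: arc_le_refl.
  by case: (s'dec a ord_max ltak).
case: (sdec n n.+1 (ltnSn n)) => _; apply.
exact: arc_le_trans lesn (arc_le_trans le_last leas).
Qed.

Section MetOfUlt.
Variables (X : topologicalType) (s : nat -> G) (d : X -> X -> Rdefinitions.R).
Hypothesis s_gt0 : forall n, lt_of le 0 (s n).
Hypothesis s_dec : forall a b, (a < b)%N -> lt_of le (s b) (s a).
Hypothesis s_coinitial : forall r, lt_of le 0 r -> exists n, lt_of le (s n) r.
Hypothesis d_ult : in_Ult_R d.

Definition met_of_ult x y : G :=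
  if d x y == 0 then 0 else s (Num.truncn (d x y)^-1).

Let d_gt0 x y : d x y != 0 -> 0 < d x y.
Proof. by case: d_ult => [[d_ge0 _] _] dxy0; rewrite lt_def dxy0 d_ge0. Qed.

Let s_le a b : (a <= b)%N -> le (s b) (s a).
Proof. by rewrite leq_eqVlt => /orP[/eqP->|/s_dec[]//]; apply: leG_refl. Qed.

Let s_lt_ltn a b : lt_of le (s a) (s b) -> (b < a)%N.
Proof.
by move=> [lesab nesab]; rewrite ltnNge; apply/negP => /s_le /(leG_antisym lesab).
Qed.

Lemma met_of_ult_ge0 x y : le 0 (met_of_ult x y).
Proof.
rewrite /met_of_ult; case: eqP => _; first exact: leG_refl.
by case: (s_gt0 (Num.truncn (d x y)^-1)).
Qed.

Lemma met_of_ult_le x y x' y' : d x y <= d x' y' -> le (met_of_ult x y) (met_of_ult x' y').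
Proof.
move=> ledd; rewrite {1}/met_of_ult.
case: eqP => [_|/eqP /d_gt0 dxy_gt0]; first exact: met_of_ult_ge0.
rewrite /met_of_ult gt_eqF ?(lt_le_trans dxy_gt0) //.
exact/s_le/leq_truncn_inv.
Qed.

Lemma met_of_ult_Gmetric : is_Gmetric le met_of_ult.
Proof.
case: d_ult => [[_ [d_eq0 [d_sym d_max]]] _]; split; [|split; [|split]].
- move=> x y; rewrite /met_of_ult; case: eqP => [/d_eq0 //|dxy0].
  split=> [s0|exy]; last by case: dxy0; apply/d_eq0.
  by have [_ /(_ (esym s0))] := s_gt0 (Num.truncn (d x y)^-1).
- exact: met_of_ult_ge0.
- by move=> x y; rewrite /met_of_ult d_sym.
- move=> x y z; have := d_max x y z; rewrite le_max => /orP[] /met_of_ult_le lexy.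
  + exact: leG_trans lexy (le_addr_nonneg _ (met_of_ult_ge0 _ _)).
  + exact: leG_trans lexy (le_addl_nonneg _ (met_of_ult_ge0 _ _)).
Qed.

Lemma met_of_ult_generates : Gmetric_generates le met_of_ult.
Proof.
case: d_ult => [_ d_open] U; rewrite d_open.
apply: (nested_balls_generate (PI := fun e => 0 < e) (B := fun x e => [set y | d x y < e]))
  => [x e e_gt0|x r r_gt0].
- have [n ltne] := exists_inv_natS_lt e_gt0; exists (s n) => // y /=.
  rewrite /met_of_ult; case: eqP => [->//|/eqP /d_gt0 dxy_gt0 /s_lt_ltn].
  by rewrite ltn_truncn_inv // => /le_lt_trans; apply.
- have [n ltsnr] := s_coinitial r_gt0; exists n.+1%:R^-1; first by rewrite invr_gt0 ltr0n.
  move=> y /=; rewrite /met_of_ult; case: eqP => [_ _|/eqP /d_gt0 dxy_gt0 ltdn].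
    exact: r_gt0.
  apply: le_lt_trans_of ltsnr; apply: s_le.
  by rewrite ltnW // ltn_truncn_inv // ltW.
Qed.

End MetOfUlt.

Section UltOfMet.
Variables (X : topologicalType) (s : nat -> G) (d : X -> X -> G).
Hypothesis s_family : arc_coinitial_dec_family le (fun a b : nat => (a < b)%N) s.
Hypothesis d_met : in_Met le d.

(* For [t] not positive the set is empty and [get] returns the junk value 0. *)
Definition arc_level (t : G) : nat :=
  get [set n | arc_le le (s n) t /\ forall m, arc_le le (s m) t -> (n <= m)%N].

Lemma arc_levelP t : lt_of le 0 t ->
  arc_le le (s (arc_level t)) t /\ forall m, arc_le le (s m) t -> (arc_level t <= m)%N.
Proof.
case: s_family => _ [_ s_coinitial] /s_coinitial exs.
pose P := [set n | arc_le le (s n) t /\ forall m, arc_le le (s m) t -> (n <= m)%N].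
suff: P (get P) by []; apply: getPex.
have exsb : exists n, `[< arc_le le (s n) t >] by case: exs => n ?; exists n; apply/asboolP.
case: (ex_minnP exsb) => n /asboolP lesnt n_min; exists n; split=> // m /asboolP.
exact: n_min.
Qed.

Lemma arc_level_mono t u m : (0 < m)%N -> lt_of le 0 t -> lt_of le 0 u ->
  le t (u *+ m) -> (arc_level u <= arc_level t)%N.
Proof.
move=> m_gt0 /arc_levelP[lest _] /arc_levelP[_ u_min] letu.
exact/u_min/(arc_le_trans_le m_gt0 lest letu).
Qed.

Definition ult_of_met x y : Rdefinitions.R :=
  if d x y == 0 then 0 else (arc_level (d x y)).+1%:R^-1.

Let d_gt0 x y : d x y != 0 -> lt_of le 0 (d x y).
Proof. by case: d_met => [[_ [d_ge0 _]] _] /eqP dxy0; split=> // /esym. Qed.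

Lemma ult_of_met_ge0 x y : 0 <= ult_of_met x y.
Proof. by rewrite /ult_of_met; case: eqP => // _; rewrite invr_ge0 ler0n. Qed.

Lemma ult_of_met_le x y x' y' m : (0 < m)%N -> le (d x y) (d x' y' *+ m) ->
  ult_of_met x y <= ult_of_met x' y'.
Proof.
case: d_met => [[_ [d_ge0 _]] _] m_gt0 ledd; rewrite {1}/ult_of_met.
case: eqP => [_|/eqP dxy0]; first exact: ult_of_met_ge0.
have dxy'0 : d x' y' != 0.
  apply: contra dxy0 => /eqP dxy'0; rewrite dxy'0 mul0rn in ledd.
  by rewrite (leG_antisym ledd).
rewrite /ult_of_met (negPf dxy'0) lef_inv_natS.
exact: arc_level_mono m_gt0 (d_gt0 dxy0) (d_gt0 dxy'0) ledd.
Qed.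

Lemma ult_of_met_ultrametric : is_R_ultrametric ult_of_met.
Proof.
case: d_met => [[d_eq0 [_ [d_sym d_tri]]] _]; split; [|split; [|split]].
- exact: ult_of_met_ge0.
- move=> x y; rewrite /ult_of_met; case: eqP => [/d_eq0 //|dxy0].
  by split=> [/eqP|exy]; [rewrite invr_eq0 pnatr_eq0 | case: dxy0; apply/d_eq0].
- by move=> x y; rewrite /ult_of_met d_sym.
- move=> x y z; rewrite le_max; apply/orP.
  have [lexz|lezy] := leG_total (d x z) (d z y); [right|left];
    apply: (ult_of_met_le (m := 2)) => //; apply: leG_trans (d_tri x y z) _; rewrite mulr2n.
  + exact: leG_add2r.
  + by rewrite addrC; apply: leG_add2r.
Qed.

Lemma ult_of_met_generates (U : set X) : open U <->
  (forall x, U x -> exists r, 0 < r /\ [set y | ult_of_met x y < r] `<=` U).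
Proof.
case: d_met => [_ d_gen]; case: s_family => s_gt0 [s_dec s_coinitial]; rewrite d_gen.
apply: (nested_balls_generate (PI := fun r => lt_of le 0 r)
  (B := fun x r => [set y | lt_of le (d x y) r])) => [x r r_gt0|x e e_gt0].
- have [j lesjr] := s_coinitial _ r_gt0; exists j.+1%:R^-1; first by rewrite invr_gt0 ltr0n.
  move=> y /=; rewrite /ult_of_met; case: eqP => [->//|/eqP dxy0].
  rewrite ltf_inv_natS => ltj; apply: lt_of_not_le => lerd.
  have [_ level_min] := arc_levelP (d_gt0 dxy0).
  have lesjd : arc_le le (s j) (d x y) by apply: (arc_le_trans_le (m := 1)) lesjr lerd.
  by have := leq_ltn_trans (level_min j lesjd) ltj; rewrite ltnn.
- have [n ltne] := exists_inv_natS_lt e_gt0; exists (s n) => // y /=.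
  rewrite /ult_of_met; case: eqP => [_ _ //|/eqP dxy0 [ledsn _]].
  apply: le_lt_trans ltne; rewrite lef_inv_natS leqNgt; apply/negP => ltln.
  have [lesd _] := arc_levelP (d_gt0 dxy0).
  by case: (s_dec _ _ ltln) => _; apply; apply: (arc_le_trans_le (m := 1)) lesd _.
Qed.

End UltOfMet.

End LinOrdAbelian.

(* [lowdeg 0 = 0] and [lowc 0 = 0], so [0 <= lowc p] says that p is 0 or its
   lowest nonzero coefficient is positive. *)
Definition lowdeg (p : {poly int}) : nat := find (fun c => c != 0) p.

Definition lowc (p : {poly int}) : int := p`_(lowdeg p).

Definition ple (p q : {poly int}) : Prop := 0 <= lowc (q - p).

Lemma coef_lt_lowdeg (p : {poly int}) i : (i < lowdeg p)%N -> p`_i = 0.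
Proof. by move/(before_find 0)/negbFE/eqP. Qed.

Lemma has_coef_neq0 (p : {poly int}) n : p`_n != 0 -> has (fun c => c != 0) p.
Proof.
move=> pn0; apply/(has_nthP 0); exists n => //.
by rewrite ltnNge; apply: contra pn0 => /leq_sizeP->.
Qed.

Lemma lowdeg_eq (p : {poly int}) n :
  (forall i, (i < n)%N -> p`_i = 0) -> p`_n != 0 -> lowdeg p = n.
Proof.
move=> below pn0; apply/eqP; rewrite eqn_leq; apply/andP; split.
  by rewrite leqNgt; apply: contra pn0 => /coef_lt_lowdeg ->.
rewrite leqNgt; apply/negP => /below /eqP.
by apply/negP; apply: (nth_find 0 (has_coef_neq0 pn0)).
Qed.

Lemma lowcE (p : {poly int}) n :
  (forall i, (i < n)%N -> p`_i = 0) -> p`_n != 0 -> lowc p = p`_n.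
Proof. by move=> below pn0; rewrite /lowc (lowdeg_eq below pn0). Qed.

Lemma lowc_eq0 (p : {poly int}) : (lowc p == 0) = (p == 0).
Proof.
apply/idP/eqP => [|->]; last by rewrite /lowc coef0.
apply: contraTeq => p0; apply: (nth_find 0 (has_coef_neq0 (n := (size p).-1) _)).
by rewrite -lead_coefE lead_coef_eq0.
Qed.

Lemma lowdegN (p : {poly int}) : lowdeg (- p) = lowdeg p.
Proof.
have [->|p0] := eqVneq p 0; first by rewrite oppr0.
apply: lowdeg_eq => [i /coef_lt_lowdeg vi|]; rewrite coefN ?vi ?oppr0 //.
by rewrite oppr_eq0 lowc_eq0.
Qed.

Lemma lowcN (p : {poly int}) : lowc (- p) = - lowc p.
Proof. by rewrite /lowc lowdegN coefN. Qed.

Lemma lowdegMn (p : {poly int}) m : (0 < m)%N -> lowdeg (p *+ m) = lowdeg p.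
Proof.
move=> m_gt0; have [->|p0] := eqVneq p 0; first by rewrite mul0rn.
apply: lowdeg_eq => [i /coef_lt_lowdeg vi|]; rewrite coefMn ?vi ?mul0rn //.
by rewrite mulrn_eq0 negb_or -lt0n m_gt0 lowc_eq0.
Qed.

Lemma lowcMn (p : {poly int}) m : (0 < m)%N -> lowc (p *+ m) = lowc p *+ m.
Proof. by move=> m_gt0; rewrite /lowc lowdegMn // coefMn. Qed.

Lemma lowcDl (p r : {poly int}) :
  p != 0 -> (lowdeg p < lowdeg r)%N -> lowc (p + r) = lowc p.
Proof.
move=> p0 ltpr.
have below i : (i < lowdeg p)%N -> (p + r)`_i = 0.
  by move=> ltip; rewrite coefD !coef_lt_lowdeg ?addr0 // (ltn_trans ltip).
have at_lowdeg : (p + r)`_(lowdeg p) = lowc p.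
  by rewrite coefD (coef_lt_lowdeg ltpr) addr0.
by rewrite (lowcE below) at_lowdeg // lowc_eq0.
Qed.

Lemma lowcB (p q : {poly int}) :
  lowdeg p = lowdeg q -> lowc p != lowc q -> lowc (p - q) = lowc p - lowc q.
Proof.
move=> epq neq.
have below i : (i < lowdeg p)%N -> (p - q)`_i = 0.
  by move=> ltip; rewrite coefB !coef_lt_lowdeg ?subr0 // -epq.
have at_lowdeg : (p - q)`_(lowdeg p) = lowc p - lowc q by rewrite coefB /lowc epq.
by rewrite (lowcE below) at_lowdeg // subr_eq0.
Qed.

Lemma lowc_addr_ge0 (p q : {poly int}) :
  0 <= lowc p -> 0 <= lowc q -> 0 <= lowc (p + q).
Proof.
have [->|p0] := eqVneq p 0; first by rewrite add0r.
have [->|q0] := eqVneq q 0; first by rewrite addr0.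
move=> ge0p ge0q; have lowcp : 0 < lowc p by rewrite lt_def lowc_eq0 p0.
have lowcq : 0 < lowc q by rewrite lt_def lowc_eq0 q0.
case: (ltngtP (lowdeg p) (lowdeg q)) => [ltpq|ltqp|epq].
- by rewrite lowcDl // ltW.
- by rewrite addrC lowcDl // ltW.
rewrite -[q]opprK lowcB ?lowdegN ?lowcN ?opprK ?addr_ge0 //.
by rewrite gt_eqF // (lt_trans _ lowcp) // oppr_lt0.
Qed.

Lemma lowcBC (p q : {poly int}) : lowc (p - q) = - lowc (q - p).
Proof. by rewrite -lowcN opprB. Qed.

Lemma ple_lin : lin_ord_abelian ple.
Proof.
rewrite /ple; split; [|split; [|split; [|split]]].
- by move=> p; rewrite subrr /lowc coef0.
- move=> p q; rewrite (lowcBC p q) oppr_ge0 => ge0 le0.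
  by apply/eqP; rewrite eq_sym -subr_eq0 -lowc_eq0 eq_le ge0 le0.
- by move=> p q r lepq leqr; rewrite -(subrKA q) addrC lowc_addr_ge0.
- by move=> p q; rewrite (lowcBC p q) oppr_ge0; apply/orP/le_total.
- by move=> p q r; rewrite opprD addrACA subrr addr0.
Qed.

Lemma ple_gt0 (p : {poly int}) : lt_of ple 0 p <-> 0 < lowc p.
Proof.
rewrite /lt_of /ple subr0 lt_def lowc_eq0; split=> [[-> /eqP]|/andP[p0 ->]].
  by rewrite eq_sym => ->.
by split=> // p_eq0; rewrite -p_eq0 eqxx in p0.
Qed.

Lemma lt_ple_lowdeg (p q : {poly int}) :
  0 < lowc q -> (lowdeg q < lowdeg p)%N -> lt_of ple p q.
Proof.
move=> lowcq ltqp; have q0 : q != 0 by rewrite -lowc_eq0 gt_eqF.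
have lowcqp : lowc (q - p) = lowc q by rewrite lowcDl ?lowdegN.
split; first by rewrite /ple lowcqp ltW.
by move=> epq; move: lowcq; rewrite -lowcqp epq subrr /lowc coef0 ltxx.
Qed.

Lemma lowdeg_le_of_ple (p q : {poly int}) :
  0 < lowc p -> ple p q -> (lowdeg q <= lowdeg p)%N.
Proof.
move=> lowcp lepq; rewrite leqNgt; apply/negP => ltpq.
have [leqp neqp] := lt_ple_lowdeg lowcp ltpq.
by case: ple_lin => _ [anti _]; apply: neqp; apply: anti.
Qed.

Lemma lt_ple_lowc (p q : {poly int}) :
  lowdeg p = lowdeg q -> lowc q < lowc p -> lt_of ple q p.
Proof.
move=> epq ltqp; have lowcpq : lowc (p - q) = lowc p - lowc q by rewrite lowcB ?gt_eqF.
split; first by rewrite /ple lowcpq subr_ge0 ltW.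
by move=> eqp; rewrite eqp ltxx in ltqp.
Qed.

Lemma exists_mulrn_gt (a b : int) : 0 < a -> exists2 n, (0 < n)%N & b < a *+ n.
Proof. by move=> a_gt0; exists `|b|%N.+1 => //; rewrite -mulr_natr; nia. Qed.

Lemma ple_mulrn_of_lowdeg (p q : {poly int}) :
  0 < lowc p -> lowdeg p = lowdeg q -> exists n, (1 <= n)%N /\ ple q (p *+ n).
Proof.
move=> lowcp epq; have [n n_gt0 ltqpn] := exists_mulrn_gt (lowc q) lowcp.
exists n; split=> //; apply: (lt_ple_lowc _ _).1; first by rewrite lowdegMn.
by rewrite lowcMn.
Qed.

Lemma arc_le_ple (p q : {poly int}) :
  0 < lowc p -> 0 < lowc q -> arc_le ple p q <-> (lowdeg q <= lowdeg p)%N.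
Proof.
move=> lowcp lowcq; split=> [[ltpq|[_ [m [m_gt0 lepqm]]]]|].
- by have [lepq _] := ltpq 1%N isT; apply: lowdeg_le_of_ple.
- by rewrite -(lowdegMn q m_gt0) lowdeg_le_of_ple.
rewrite leq_eqVlt => /orP[/eqP eqp|ltqp].
  by right; split; apply: ple_mulrn_of_lowdeg.
by left=> n n_gt0; apply: lt_ple_lowdeg; rewrite ?lowdegMn.
Qed.

Lemma lowdegXn n : lowdeg 'X^n = n.
Proof.
by apply: lowdeg_eq => [i /ltn_eqF|]; rewrite coefXn ?eqxx ?oner_eq0 // => ->.
Qed.

Lemma lowcXn n : lowc 'X^n = 1.
Proof. by rewrite /lowc lowdegXn coefXn eqxx. Qed.

Lemma Xn_ple_gt0 n : lt_of ple 0 'X^n.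
Proof. by apply/ple_gt0; rewrite lowcXn. Qed.

Lemma Xn_arc_coinitial_dec_family :
  arc_coinitial_dec_family ple (fun a b : nat => (a < b)%N) (fun n => 'X^n).
Proof.
have lowcXn_gt0 n : 0 < lowc 'X^n by rewrite lowcXn.
split; [|split].
- exact: Xn_ple_gt0.
- move=> a b ltab; rewrite /arc_lt !arc_le_ple // !lowdegXn (ltnW ltab).
  by split=> //; apply/negP; rewrite -ltnNge.
- move=> t /ple_gt0 lowct; exists (lowdeg t).
  by rewrite arc_le_ple // lowdegXn.
Qed.

Lemma Xn_ple_dec a b : (a < b)%N -> lt_of ple 'X^b 'X^a.
Proof. by move=> ltab; apply: lt_ple_lowdeg; rewrite ?lowcXn ?lowdegXn. Qed.

Lemma Xn_ple_coinitial r : lt_of ple 0 r -> exists n, lt_of ple 'X^n r.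
Proof.
by move=> /ple_gt0 lowcr; exists (lowdeg r).+1; apply: lt_ple_lowdeg; rewrite ?lowdegXn.
Qed.

Theorem proposition2p46 (X : topologicalType) :
  (exists d : X -> X -> Rdefinitions.R, in_Ult_R d) <-> omega0_in_MG X.
Proof.
split=> [[d d_ult]|[G [le [leG [[_ [s s_family]] [d d_met]]]]]].
- exists {poly int}, ple; split; first exact: ple_lin.
  split; first exact: (chi_arc_eq_omega0I ple_lin Xn_arc_coinitial_dec_family).
  exists (met_of_ult (fun n => 'X^n : {poly int}) d); split.
  + exact: (met_of_ult_Gmetric ple_lin Xn_ple_gt0 Xn_ple_dec d_ult).
  + exact: (met_of_ult_generates ple_lin Xn_ple_gt0 Xn_ple_dec Xn_ple_coinitial d_ult).
- exists (ult_of_met le s d); split.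
  + exact: (ult_of_met_ultrametric leG s_family d_met).
  + exact: (ult_of_met_generates leG s_family d_met).
Qed.
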